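(* For $\epsilon > 0$ let $f_\epsilon(\theta) = \epsilon + \cos\theta$, viewed as a holomorphic function on the complex cylinder $\mathcal C = \mathbb C / 2\pi\mathbb Z$. For a piecewise-$C^1$ closed curve $\gamma$ in $\mathcal C$ that is homotopic to the real circle $\{\theta : \Im\theta = 0\}$ (traversed once in the direction of increasing $\Re\theta$), define $$Z_\gamma(\epsilon) = \int_\gamma f_\epsilon(\theta)\,\mathrm d\theta,\qquad Z_{Q,\gamma}(\epsilon) = \int_\gamma |f_\epsilon(\theta)|\,|\mathrm d\theta|,\qquad \langle\sigma\rangle_\gamma(\epsilon) = \frac{Z_\gamma(\epsilon)}{Z_{Q,\gamma}(\epsilon)}.$$ Then $Z_\gamma(\epsilon) = 2\pi\epsilon$ for every such $\gamma$, and there is a constant $C$ such that for all sufficiently small $\epsilon>0$ and every such curve $\gamma$, $$\langle\sigma\rangle_\gamma(\epsilon) \le \frac{\pi}{2}\,\epsilon + C\epsilon^2 .$$ In particular no such deformation of the contour achieves an average sign larger than $\frac{\pi}{2}\epsilon + O(\epsilon^2)$, the same order as on the real circle.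
   Context: This models a one-site ''lattice'' with partition function $Z(\epsilon)=\int_0^{2\pi}(\epsilon+\cos\theta)\,\mathrm d\theta$, i.e. Boltzmann factor $e^{-S}$ with $S_\epsilon(\theta) = -\log(\epsilon+\cos\theta)$. The ''average sign'' on an integration contour is the ratio of the partition function (integral of the Boltzmann factor along the contour) to the quenched partition function (integral of the absolute value of the Boltzmann factor with respect to arc length along the contour). Contour deformations are homotopies within the complexified domain of integration, the cylinder $\mathbb C/2\pi\mathbb Z$. *)

From Stdlib Require Import Reals List.
Import ListNotations.
From Coquelicot Require Import Coquelicot.
Open Scope R_scope.

Definition Cexp (z : C) : C := (exp (Re z) * cos (Im z), exp (Re z) * sin (Im z)).
Definition Ccos (z : C) : C := ((Cexp (Ci * z) + Cexp (- (Ci * z))) / RtoC 2)%C.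

Definition f_eps (eps : R) (z : C) : C := (RtoC eps + Ccos z)%C.

(* The cylinder C / 2 pi Z : a closed curve in the cylinder is represented by
   a lift gamma : [0,1] -> C with gamma 1 - gamma 0 in 2 pi Z (all quantities
   below are invariant under the choice of lift). *)

Definition unit_int (t : R) : Prop := 0 <= t <= 1.

Definition continuous_on_01 (g : R -> C) : Prop :=
  forall t, unit_int t -> filterlim g (within unit_int (locally t)) (locally (g t)).

Fixpoint strictly_increasing (l : list R) : Prop :=
  match l with
  | nil => True
  | a :: l' => match l' with
               | nil => True
               | b :: _ => a < b /\ strictly_increasing l'
               end
  end.

Fixpoint consecutive (l : list R) : list (R * R) :=
  match l with
  | nil => nil
  | a :: l' => match l' with
               | nil => nil
               | b :: _ => (a, b) :: consecutive l'
               end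
  end.

(* gamma restricted to [a,b] is C^1: its derivative on (a,b) extends to a
   function continuous on [a,b] (one-sided derivatives at the ends then exist
   and agree with it, by continuity of gamma on [a,b]). *)
Definition C1_on (g : R -> C) (a b : R) : Prop :=
  exists dg : R -> C,
    (forall t, a < t < b -> is_derive g t (dg t)) /\
    (forall t, a <= t <= b ->
       filterlim dg (within (fun u => a <= u <= b) (locally t)) (locally (dg t))).

Definition piecewise_C1 (g : R -> C) : Prop :=
  continuous_on_01 g /\
  exists l : list R,
    strictly_increasing ((0 :: l ++ 1 :: nil)%list) /\
    forall p, List.In p (consecutive ((0 :: l ++ 1 :: nil)%list)) -> C1_on g (fst p) (snd p).

Definition closed_in_cylinder (g : R -> C) : Prop :=
  exists k : Z, (g 1 - g 0)%C = RtoC (2 * PI * IZR k).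

Definition real_circle (t : R) : C := RtoC (2 * PI * t).

(* free homotopy of closed curves in the cylinder, expressed through a lift of
   the homotopy to C (the square [0,1]^2 is simply connected, so every
   homotopy into the cylinder lifts) *)
Definition homotopic_to_real_circle (g : R -> C) : Prop :=
  exists H : R * R -> C,
    (forall p : R * R, unit_int (fst p) -> unit_int (snd p) ->
       filterlim H (within (fun q : R * R => unit_int (fst q) /\ unit_int (snd q))
                           (locally p)) (locally (H p))) /\
    (forall t, unit_int t -> H (0, t) = g t) /\
    (forall t, unit_int t -> H (1, t) = real_circle t) /\
    (forall s, unit_int s -> closed_in_cylinder (fun t => H (s, t))).

Definition admissible_contour (g : R -> C) : Prop :=
  piecewise_C1 g /\ closed_in_cylinder g /\ homotopic_to_real_circle g.

(* derivative of a curve R -> C, componentwise (where gamma is differentiable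
   this is its derivative; at the finitely many corners the value is irrelevant
   for the Riemann integrals below) *)
Definition Cderive (g : R -> C) (t : R) : C :=
  (Derive (fun u => Re (g u)) t, Derive (fun u => Im (g u)) t).

Definition Z_gamma (eps : R) (g : R -> C) : C :=
  RInt (V := C_R_CompleteNormedModule)
       (fun t => (f_eps eps (g t) * Cderive g t)%C) 0 1.

Definition ZQ_gamma (eps : R) (g : R -> C) : R :=
  RInt (fun t => Cmod (f_eps eps (g t)) * Cmod (Cderive g t)) 0 1.

Definition avg_sign (eps : R) (g : R -> C) : C :=
  (Z_gamma eps g / RtoC (ZQ_gamma eps g))%C.

From Stdlib Require Import Reals Lra Lia List.
From Coquelicot Require Import Coquelicot.
Open Scope R_scope.

(* [eps z + sin z] is a primitive of [f_eps], and its value grows by exactly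
   [2 pi eps] under [z |-> z + 2 pi]; the winding number being a homotopy
   invariant, the endpoints of every admissible contour differ by [2 pi], so
   [Z_gamma = 2 pi eps].
   Since [|f_eps(z) dz| >= |Re (f_eps(z) dz)| = |du|] with
   [u = Re (eps z + sin z) = eps x + sin x cosh y], the quenched integral is at
   least the variation of [u] along the contour. The real part [x] crosses a
   zero [L] of [cos] and then [L + pi], where [u = eps L + s cosh y1] and
   [u = eps (L + pi) - s cosh y2] with [s = +-1]; comparing with the endpoints
   gives [Z_Q >= 2 (cosh y1 + cosh y2) >= 4], hence
   [<sigma> <= 2 pi eps / 4 = pi eps / 2]. *)

Lemma continuous_pow_comp (f : R -> R) (n : nat) x :
  continuous f x -> continuous (fun t => f t ^ n) x.
Proof.
  intros Hf. induction n as [|n IH]; simpl.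
  - apply continuous_const.
  - apply (continuous_mult f (fun t => f t ^ n)); assumption.
Qed.

Lemma continuous_cosh_comp (f : R -> R) x :
  continuous f x -> continuous (fun t => cosh (f t)) x.
Proof.
  intros Hf. apply (continuous_comp f cosh); [assumption|].
  apply continuity_pt_filterlim, derivable_continuous_pt, derivable_pt_cosh.
Qed.

Lemma continuous_sinh_comp (f : R -> R) x :
  continuous f x -> continuous (fun t => sinh (f t)) x.
Proof.
  intros Hf. apply (continuous_comp f sinh); [assumption|].
  apply continuity_pt_filterlim, derivable_continuous_pt, derivable_pt_sinh.
Qed.

Ltac continuity_R :=
  repeat match goal with
  | |- continuous (fun t => @?f t + @?g t) _ => apply (continuous_plus f g)
  | |- continuous (fun t => @?f t - @?g t) _ => apply (continuous_minus f g)
  | |- continuous (fun t => @?f t * @?g t) _ => apply (continuous_mult f g)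
  | |- continuous (fun t => - @?f t) _ => apply (continuous_opp f)
  | |- continuous (fun t => @?f t ^ _) _ => apply (continuous_pow_comp f)
  | |- continuous (fun t => sqrt (@?f t)) _ => apply (continuous_sqrt_comp f)
  | |- continuous (fun t => sin (@?f t)) _ => apply (continuous_sin_comp f)
  | |- continuous (fun t => cos (@?f t)) _ => apply (continuous_cos_comp f)
  | |- continuous (fun t => cosh (@?f t)) _ => apply (continuous_cosh_comp f)
  | |- continuous (fun t => sinh (@?f t)) _ => apply (continuous_sinh_comp f)
  | |- continuous (fun _ => _) _ => apply continuous_const
  | |- continuous (fun t => ?f t) _ => assumption
  end.

Definition clamp (c d t : R) : R := Rmax c (Rmin d t).

Lemma clamp_in c d t : c <= d -> c <= clamp c d t <= d.
Proof. intros. unfold clamp, Rmax, Rmin. repeat destruct Rle_dec; lra. Qed.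

Lemma clamp_id c d t : c <= t <= d -> clamp c d t = t.
Proof. intros. unfold clamp, Rmax, Rmin. repeat destruct Rle_dec; lra. Qed.

Lemma Rabs_clamp_sub_le c d t s : c <= d -> Rabs (clamp c d t - clamp c d s) <= Rabs (t - s).
Proof.
  intros. unfold clamp, Rmax, Rmin. repeat destruct Rle_dec; split_Rabs; lra.
Qed.

Lemma continuous_clamp_comp {U : UniformSpace} (h : R -> U) c d : c <= d ->
  (forall t, c <= t <= d ->
     filterlim h (within (fun u => c <= u <= d) (locally t)) (locally (h t))) ->
  forall s, continuous (fun t => h (clamp c d t)) s.
Proof.
  intros Hcd Hh s P HP.
  destruct (Hh (clamp c d s) (clamp_in c d s Hcd) P HP) as [e He].
  exists e. intros y Hy. apply He; [|apply clamp_in; exact Hcd].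
  apply (Rle_lt_trans _ _ _ (Rabs_clamp_sub_le c d y s Hcd) Hy).
Qed.

Lemma filterlim_within_subset {U : UniformSpace} (h : R -> U) (A B : R -> Prop) t F :
  (forall x, A x -> B x) -> filterlim h (within B (locally t)) F ->
  filterlim h (within A (locally t)) F.
Proof.
  intros HAB H. eapply filterlim_filter_le_1; [|exact H].
  intros P HP. unfold within in *. eapply filter_imp; [|exact HP]. auto.
Qed.

Lemma locally_open_interval c d t : c < t < d -> locally t (fun u => c < u < d).
Proof.
  intros H.
  assert (Hr : 0 < Rmin (t - c) (d - t)) by (apply Rmin_pos; lra).
  exists (mkposreal _ Hr). intros u Hu. simpl in Hu.
  assert (H1 := Rmin_l (t - c) (d - t)). assert (H2 := Rmin_r (t - c) (d - t)).
  change (Rabs (u - t) < Rmin (t - c) (d - t)) in Hu. split_Rabs; lra.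
Qed.

(* Only interior derivatives are required: the mean value theorem is applied to
   [s |-> RInt psi a s - u s], whose derivative vanishes on (a, b). *)
Lemma is_RInt_derive_interior (u psi : R -> R) a b : a <= b ->
  (forall t, continuous u t) -> (forall t, continuous psi t) ->
  (forall t, a < t < b -> is_derive u t (psi t)) ->
  is_RInt psi a b (u b - u a).
Proof.
  intros Hab Hu Hpsi Hd.
  assert (Hex : forall x y, ex_RInt psi x y).
  { intros x y. apply (ex_RInt_continuous (V := R_CompleteNormedModule)). auto. }
  assert (Hprim : forall x, is_derive (fun s => RInt psi a s) x (psi x)).
  { intros x. apply is_derive_RInt with (a := a); [|apply Hpsi].
    apply filter_forall. intros y. apply RInt_correct, Hex. }
  destruct (MVT_gen (fun s => RInt psi a s - u s) a b (fun _ => 0)) as [c [_ Hc]].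
  - intros x Hx. rewrite Rmin_left, Rmax_right in Hx by lra.
    replace 0 with (minus (psi x) (psi x)) by (unfold minus, plus, opp; simpl; ring).
    apply (is_derive_minus _ _ _ _ _ (Hprim x) (Hd x Hx)).
  - intros x _. apply continuity_pt_filterlim.
    apply (continuous_minus (fun s => RInt psi a s) u); [|apply Hu].
    apply ex_derive_continuous. eexists. apply Hprim.
  - rewrite RInt_point in Hc. unfold zero in Hc; simpl in Hc.
    replace (u b - u a) with (RInt psi a b) by lra.
    apply (RInt_correct (V := R_CompleteNormedModule)), Hex.
Qed.

Lemma IZR_ne_add_half (k m : Z) : IZR k <> IZR m + / 2.
Proof.
  intros H. assert (E : IZR (2 * k - 2 * m) = 1) by (rewrite minus_IZR, !mult_IZR; lra).
  apply eq_IZR in E. lia.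
Qed.

(* Between two distinct integer values lies a half-integer, which the
   intermediate value theorem would force the function to take. *)
Lemma continuous_integer_valued_eq (f : R -> R) a b : a <= b ->
  (forall x, continuous f x) ->
  (forall s, a <= s <= b -> exists k : Z, f s = IZR k) ->
  f a = f b.
Proof.
  intros Hab Hf Hint.
  destruct (Hint a ltac:(lra)) as [ka Ha]. destruct (Hint b ltac:(lra)) as [kb Hb].
  destruct (Z.eq_dec ka kb) as [<-|Hne]; [congruence|exfalso].
  assert (Hmin : (IZR (Z.min ka kb) + 1 <= Rmax (IZR ka) (IZR kb))).
  { rewrite <- plus_IZR. destruct (Z.min_spec ka kb) as [[Hlt ->]|[Hge ->]];
      [apply (Rle_trans _ (IZR kb)); [apply IZR_le; lia | apply Rmax_r] |
       apply (Rle_trans _ (IZR ka)); [apply IZR_le; lia | apply Rmax_l]]. }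
  assert (Hmin' : Rmin (IZR ka) (IZR kb) = IZR (Z.min ka kb)).
  { destruct (Z.min_spec ka kb) as [[Hlt ->]|[Hge ->]];
      [apply Rmin_left | apply Rmin_right]; apply IZR_le; lia. }
  destruct (IVT_gen f a b (IZR (Z.min ka kb) + / 2)) as [x [Hx Hfx]].
  - intros x. apply continuity_pt_filterlim, Hf.
  - rewrite Ha, Hb, Hmin'. lra.
  - rewrite Rmin_left, Rmax_right in Hx by lra.
    destruct (Hint x Hx) as [k Hk]. apply (IZR_ne_add_half k (Z.min ka kb)). congruence.
Qed.

Lemma cosh_ge_1 y : 1 <= cosh y.
Proof.
  unfold cosh. rewrite exp_Ropp. assert (Hpos := exp_pos y).
  assert (Hsq : 0 <= (exp y - 1) ^ 2 / exp y)
    by (apply Rdiv_le_0_compat; [apply pow2_ge_0 | lra]).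
  replace ((exp y - 1) ^ 2 / exp y) with (exp y - 2 + / exp y) in Hsq by (field; lra).
  lra.
Qed.

Lemma is_derive_Re (g : R -> C) t (l : C) :
  is_derive (V := C_R_NormedModule) g t l -> is_derive (fun u => Re (g u)) t (Re l).
Proof.
  intros H. apply (filterdiff_comp g (fun z : C_R_NormedModule => fst z) _ (fun z => fst z) H).
  apply filterdiff_linear.
  exact (is_linear_fst (K := R_AbsRing) (U := R_NormedModule) (V := R_NormedModule)).
Qed.

Lemma is_derive_Im (g : R -> C) t (l : C) :
  is_derive (V := C_R_NormedModule) g t l -> is_derive (fun u => Im (g u)) t (Im l).
Proof.
  intros H. apply (filterdiff_comp g (fun z : C_R_NormedModule => snd z) _ (fun z => snd z) H).
  apply filterdiff_linear.
  exact (is_linear_snd (K := R_AbsRing) (U := R_NormedModule) (V := R_NormedModule)).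
Qed.

Lemma continuous_Re (h : R -> C) x : continuous h x -> continuous (fun t => Re (h t)) x.
Proof. intros H. apply (continuous_comp h fst _ H). destruct (h x). apply continuous_fst. Qed.

Lemma continuous_Im (h : R -> C) x : continuous h x -> continuous (fun t => Im (h t)) x.
Proof. intros H. apply (continuous_comp h snd _ H). destruct (h x). apply continuous_snd. Qed.

Lemma Re_RtoC_div (a q : R) : q <> 0 -> Re (RtoC a / RtoC q)%C = a / q.
Proof. intros Hq. unfold Cdiv, Cmult, Cinv, RtoC, Re; simpl. field. exact Hq. Qed.

Lemma Ccos_coords x y : Ccos (x, y) = (cos x * cosh y, - (sin x * sinh y)).
Proof.
  unfold Ccos, Cexp, Ci, cosh, sinh, Cdiv, Cmult, Cplus, Copp, Cinv, RtoC; simpl.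
  replace (0 * x - 1 * y) with (- y) by ring. replace (0 * y + 1 * x) with x by ring.
  rewrite Ropp_involutive, cos_neg, sin_neg.
  f_equal; field.
Qed.

Lemma f_eps_coords eps x y :
  f_eps eps (x, y) = (eps + cos x * cosh y, - (sin x * sinh y)).
Proof. unfold f_eps. rewrite Ccos_coords. unfold Cplus, RtoC; simpl. f_equal; ring. Qed.

(* [eps z + sin z], a primitive of [f_eps eps], in real coordinates. *)
Definition F_eps (eps : R) (z : C) : C :=
  (eps * Re z + sin (Re z) * cosh (Im z), eps * Im z + cos (Re z) * sinh (Im z)).

Lemma F_eps_add_2PI eps z :
  F_eps eps (z + RtoC (2 * PI))%C = (F_eps eps z + RtoC (2 * PI * eps))%C.
Proof.
  destruct z as [x y]. unfold F_eps, Cplus, RtoC, Re, Im; simpl.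
  rewrite Rplus_0_r, sin_plus, cos_plus, sin_2PI, cos_2PI.
  f_equal; ring.
Qed.

Lemma is_derive_F_eps_comp eps (X Y : R -> R) t dX dY :
  is_derive X t dX -> is_derive Y t dY ->
  is_derive (fun s => Re (F_eps eps (X s, Y s))) t (Re (f_eps eps (X t, Y t) * (dX, dY))) /\
  is_derive (fun s => Im (F_eps eps (X s, Y s))) t (Im (f_eps eps (X t, Y t) * (dX, dY))).
Proof.
  intros HX HY. rewrite f_eps_coords. unfold F_eps, Cmult, Re, Im; simpl.
  assert (EX := is_derive_unique _ _ _ HX). assert (EY := is_derive_unique _ _ _ HY).
  assert (DX : ex_derive X t) by (eexists; exact HX).
  assert (DY : ex_derive Y t) by (eexists; exact HY).
  unfold cosh, sinh. split; auto_derive; auto;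
    change (fun x => X x) with X; change (fun x => Y x) with Y;
    rewrite EX, EY; field.
Qed.

Lemma continuous_integrands_coords eps (X Y DX DY : R -> R) t :
  continuous X t -> continuous Y t -> continuous DX t -> continuous DY t ->
  continuous (fun s => Re (f_eps eps (X s, Y s) * (DX s, DY s))) t /\
  continuous (fun s => Im (f_eps eps (X s, Y s) * (DX s, DY s))) t /\
  continuous (fun s => Cmod (f_eps eps (X s, Y s)) * Cmod (DX s, DY s)) t.
Proof.
  intros HX HY HDX HDY.
  split; [|split]; eapply continuous_ext;
    try (intros s; rewrite f_eps_coords; unfold Cmult, Cmod, Re, Im; simpl; reflexivity);
    continuity_R.
Qed.

Lemma last_cons_default (a : R) l d1 d2 : last (a :: l) d1 = last (a :: l) d2.
Proof.
  revert a. induction l as [|b l IH]; intros a; [reflexivity|].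
  exact (IH b).
Qed.

Lemma partition_ind (P : R -> R -> Prop) :
  (forall c, P c c) ->
  (forall c d e, c <= d -> d <= e -> P c d -> P d e -> P c e) ->
  forall l a,
  (forall p, In p (consecutive (a :: l)) ->
     forall c d, fst p <= c -> c <= d -> d <= snd p -> P c d) ->
  forall c d, a <= c -> c <= d -> d <= last (a :: l) a -> P c d.
Proof.
  intros Hrefl Htrans l. induction l as [|b l IH]; intros a Hpieces c d Hac Hcd Hd.
  - simpl in Hd. replace d with c by lra. apply Hrefl.
  - change (last (a :: b :: l) a) with (last (b :: l) a) in Hd.
    rewrite (last_cons_default b l a b) in Hd.
    assert (Hfirst : forall c d, a <= c -> c <= d -> d <= b -> P c d).
    { intros c' d' H1 H2 H3. apply (Hpieces (a, b)); simpl; auto. }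
    assert (Hrest : forall c d, b <= c -> c <= d -> d <= last (b :: l) b -> P c d).
    { apply IH. intros p Hp. apply Hpieces. right. exact Hp. }
    destruct (Rle_lt_dec d b) as [Hdb|Hbd]; [apply Hfirst; lra|].
    destruct (Rle_lt_dec b c) as [Hbc|Hcb]; [apply Hrest; lra|].
    apply (Htrans c b d); try lra; [apply Hfirst | apply Hrest]; lra.
Qed.

Lemma C1_on_coords g a b c d :
  continuous_on_01 g -> C1_on g a b -> a <= c -> c <= d -> d <= b -> 0 <= c -> d <= 1 ->
  exists X Y DX DY : R -> R,
    (forall t, continuous X t /\ continuous Y t /\ continuous DX t /\ continuous DY t) /\
    (forall t, c <= t <= d -> g t = (X t, Y t)) /\
    (forall t, c < t < d ->
       Cderive g t = (DX t, DY t) /\ is_derive X t (DX t) /\ is_derive Y t (DY t)).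
Proof.
  intros Hg [dg [Hd Hdc]] Hac Hcd Hdb H0c Hd1.
  assert (HG : forall s, continuous (fun t => g (clamp c d t)) s).
  { apply continuous_clamp_comp; [lra|]. intros t Ht.
    eapply filterlim_within_subset; [|apply Hg]; unfold unit_int; intros; lra. }
  assert (HDG : forall s, continuous (fun t => dg (clamp c d t)) s).
  { apply continuous_clamp_comp; [lra|]. intros t Ht.
    eapply filterlim_within_subset; [|apply Hdc]; intros; lra. }
  exists (fun t => Re (g (clamp c d t))), (fun t => Im (g (clamp c d t))),
         (fun t => Re (dg (clamp c d t))), (fun t => Im (dg (clamp c d t))).
  split; [|split].
  - intros t. repeat split; apply continuous_Re || apply continuous_Im; auto.
  - intros t Ht. rewrite clamp_id by exact Ht. destruct (g t); reflexivity.
  - intros t Ht. rewrite clamp_id by lra. assert (Hdt := Hd t ltac:(lra)).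
    assert (Hloc : locally t (fun u => g u = g (clamp c d u))).
    { eapply filter_imp; [|apply (locally_open_interval c d t Ht)].
      intros u Hu. rewrite clamp_id; [reflexivity | lra]. }
    split; [|split].
    + unfold Cderive. f_equal; apply is_derive_unique;
        [apply is_derive_Re | apply is_derive_Im]; exact Hdt.
    + apply (is_derive_ext_loc (fun u => Re (g u))); [|apply is_derive_Re, Hdt].
      eapply filter_imp; [|exact Hloc]. intros u ->. reflexivity.
    + apply (is_derive_ext_loc (fun u => Im (g u))); [|apply is_derive_Im, Hdt].
      eapply filter_imp; [|exact Hloc]. intros u ->. reflexivity.
Qed.

Definition Z_integrand (eps : R) (g : R -> C) (t : R) : C := (f_eps eps (g t) * Cderive g t)%C.

Definition ZQ_integrand (eps : R) (g : R -> C) (t : R) : R :=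
  Cmod (f_eps eps (g t)) * Cmod (Cderive g t).

Definition contour_integrals_on (eps : R) (g : R -> C) (c d : R) : Prop :=
  is_RInt (V := C_R_NormedModule) (Z_integrand eps g) c d
    (F_eps eps (g d) - F_eps eps (g c))%C /\
  ex_RInt (ZQ_integrand eps g) c d.

Lemma contour_integrals_on_refl eps g c : contour_integrals_on eps g c c.
Proof.
  split; [|apply ex_RInt_point].
  replace (F_eps eps (g c) - F_eps eps (g c))%C with (zero : C_R_NormedModule)
    by (unfold zero; simpl; unfold prod_zero, zero; simpl;
        apply injective_projections; simpl; ring).
  apply is_RInt_point.
Qed.

Lemma contour_integrals_on_trans eps g c d e :
  contour_integrals_on eps g c d -> contour_integrals_on eps g d e ->
  contour_integrals_on eps g c e.
Proof.
  intros [Zcd Qcd] [Zde Qde]. split; [|exact (ex_RInt_Chasles _ _ _ _ Qcd Qde)].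
  replace (F_eps eps (g e) - F_eps eps (g c))%C
    with (plus (F_eps eps (g d) - F_eps eps (g c))%C (F_eps eps (g e) - F_eps eps (g d))%C).
  - exact (is_RInt_Chasles _ _ _ _ _ _ Zcd Zde).
  - unfold plus; simpl; unfold prod_plus, plus; simpl.
    apply injective_projections; simpl; ring.
Qed.

Lemma contour_integrals_on_C1_piece eps g a b c d :
  continuous_on_01 g -> C1_on g a b -> a <= c -> c <= d -> d <= b -> 0 <= c -> d <= 1 ->
  contour_integrals_on eps g c d.
Proof.
  intros Hg HC1 Hac Hcd Hdb H0c Hd1.
  destruct (C1_on_coords g a b c d Hg HC1 Hac Hcd Hdb H0c Hd1)
    as [X [Y [DX [DY [Hcont [Hg_eq Hder]]]]]].
  assert (Hint : forall t, Rmin c d < t < Rmax c d ->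
            g t = (X t, Y t) /\ Cderive g t = (DX t, DY t)).
  { rewrite Rmin_left, Rmax_right by lra. intros t Ht.
    split; [apply Hg_eq; lra | apply Hder, Ht]. }
  assert (Hcont_int : forall t,
            continuous (fun s => Re (f_eps eps (X s, Y s) * (DX s, DY s))) t /\
            continuous (fun s => Im (f_eps eps (X s, Y s) * (DX s, DY s))) t /\
            continuous (fun s => Cmod (f_eps eps (X s, Y s)) * Cmod (DX s, DY s)) t).
  { intros t. destruct (Hcont t) as [? [? [? ?]]]. apply continuous_integrands_coords; auto. }
  assert (HF : forall t, continuous (fun s => Re (F_eps eps (X s, Y s))) t /\
                continuous (fun s => Im (F_eps eps (X s, Y s))) t).
  { intros t. destruct (Hcont t) as [? [? _]]. unfold F_eps, Re, Im; simpl. split; continuity_R. }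
  split.
  - apply (is_RInt_ext (fun t => f_eps eps (X t, Y t) * (DX t, DY t))%C).
    { intros t Ht. unfold Z_integrand. destruct (Hint t Ht) as [-> ->]. reflexivity. }
    rewrite (Hg_eq c), (Hg_eq d) by lra.
    change (F_eps eps (X d, Y d) - F_eps eps (X c, Y c))%C with
      (Re (F_eps eps (X d, Y d)) - Re (F_eps eps (X c, Y c)),
       Im (F_eps eps (X d, Y d)) - Im (F_eps eps (X c, Y c))).
    apply (is_RInt_fct_extend_pair (U := R_NormedModule) (V := R_NormedModule)).
    + apply (is_RInt_derive_interior (fun s => Re (F_eps eps (X s, Y s))));
        [lra | apply HF | apply Hcont_int |].
      intros t Ht. destruct (Hder t Ht) as [_ [HX HY]].
      apply (is_derive_F_eps_comp eps X Y t _ _ HX HY).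
    + apply (is_RInt_derive_interior (fun s => Im (F_eps eps (X s, Y s))));
        [lra | apply HF | apply Hcont_int |].
      intros t Ht. destruct (Hder t Ht) as [_ [HX HY]].
      apply (is_derive_F_eps_comp eps X Y t _ _ HX HY).
  - apply (ex_RInt_ext (V := R_NormedModule)
             (fun t => Cmod (f_eps eps (X t, Y t)) * Cmod (DX t, DY t))).
    { intros t Ht. unfold ZQ_integrand. destruct (Hint t Ht) as [-> ->]. reflexivity. }
    apply (ex_RInt_continuous (V := R_CompleteNormedModule)). intros t _. apply Hcont_int.
Qed.

Lemma piecewise_C1_integrals eps g : piecewise_C1 g ->
  forall c d, 0 <= c -> c <= d -> d <= 1 -> contour_integrals_on eps g c d.
Proof.
  intros [Hg [l [_ Hpieces]]] c d H0c Hcd Hd1.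
  assert (Hlast : last (0 :: l ++ 1 :: nil) 0 = 1).
  { change (0 :: l ++ 1 :: nil) with ((0 :: l) ++ 1 :: nil). apply last_last. }
  set (P := fun c d => 0 <= c -> d <= 1 -> contour_integrals_on eps g c d).
  apply (partition_ind P) with (l := l ++ 1 :: nil) (a := 0); unfold P; auto; try lra.
  - intros c' _ _. apply contour_integrals_on_refl.
  - intros c' d' e' Hcd' Hde' Hl Hr H0 H1.
    apply (contour_integrals_on_trans eps g c' d' e'); [apply Hl | apply Hr]; lra.
  - intros p Hp c' d' Hc' Hcd' Hd' H0 H1.
    apply (contour_integrals_on_C1_piece eps g (fst p) (snd p)); auto.
Qed.

Lemma continuous_slice (H : R * R -> C) t : unit_int t ->
  (forall p : R * R, unit_int (fst p) -> unit_int (snd p) ->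
     filterlim H (within (fun q : R * R => unit_int (fst q) /\ unit_int (snd q)) (locally p))
       (locally (H p))) ->
  forall s, continuous (fun s => H (clamp 0 1 s, t)) s.
Proof.
  intros Ht HH. apply (continuous_clamp_comp (fun s => H (s, t))); [lra|].
  intros s Hs. eapply filterlim_comp; [|apply (HH (s, t)); [exact Hs | exact Ht]].
  intros P [e He]. exists e. intros y Hy Hy01.
  apply He; [split; [exact Hy | apply ball_center] | split; assumption].
Qed.

(* The winding number of the closed curves of the homotopy is continuous and
   integer valued, hence that of [g] equals that of the real circle. *)
Lemma admissible_contour_period g :
  admissible_contour g -> g 1 = (g 0 + RtoC (2 * PI))%C.
Proof.
  intros [_ [[k Hk] [H [Hcont [H0 [H1 Hclosed]]]]]].
  assert (HPI := PI_RGT_0).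
  set (w := fun s => (Re (H (clamp 0 1 s, 1)) - Re (H (clamp 0 1 s, 0))) / (2 * PI)).
  assert (Hw : w 0 = w 1).
  { apply continuous_integer_valued_eq; [lra | |].
    - intros s. unfold w, Rdiv.
      apply (continuous_mult (fun s => _ - _) (fun _ => / (2 * PI))); [|apply continuous_const].
      apply (continuous_minus (fun s => Re (H (clamp 0 1 s, 1)))
                              (fun s => Re (H (clamp 0 1 s, 0))));
        apply continuous_Re, continuous_slice; auto; unfold unit_int; lra.
    - intros s Hs. destruct (Hclosed s Hs) as [m Hm]. exists m.
      unfold w. rewrite clamp_id by exact Hs.
      apply (f_equal fst) in Hm. simpl in Hm. unfold Re.
      replace (fst (H (s, 1)) - fst (H (s, 0))) with (2 * PI * IZR m) by lra.
      field. lra. }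
  assert (Hk1 : IZR k = 1).
  { unfold w in Hw. rewrite !clamp_id in Hw by lra.
    rewrite H0, H0, H1, H1 in Hw by (unfold unit_int; lra).
    apply (f_equal fst) in Hk. simpl in Hk. unfold real_circle, RtoC, Re in Hw. simpl in Hw.
    replace (fst (g 1) - fst (g 0)) with (2 * PI * IZR k) in Hw by lra.
    field_simplify in Hw; lra. }
  rewrite Hk1, Rmult_1_r in Hk.
  destruct (g 1) as [x1 y1], (g 0) as [x0 y0]. unfold Cminus, Cplus, Copp, RtoC in *.
  injection Hk as Ex Ey. simpl. f_equal; lra.
Qed.

Lemma Z_gamma_eq eps g : admissible_contour g -> Z_gamma eps g = RtoC (2 * PI * eps).
Proof.
  intros Hadm.
  destruct (piecewise_C1_integrals eps g (proj1 Hadm) 0 1) as [HZ _]; try lra.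
  unfold Z_gamma. fold (Z_integrand eps g).
  rewrite (is_RInt_unique (V := C_R_CompleteNormedModule) _ _ _ _ HZ).
  rewrite (admissible_contour_period g Hadm), F_eps_add_2PI.
  destruct (F_eps eps (g 0)) as [u v]. unfold Cminus, Cplus, Copp, RtoC; simpl.
  f_equal; ring.
Qed.

Lemma exists_sin_unit_between x : exists L, x < L <= x + PI /\ (sin L = 1 \/ sin L = -1).
Proof.
  assert (HPI := PI_RGT_0).
  set (r := (x - PI / 2) / PI).
  destruct (archimed r) as [Hup1 Hup2].
  exists (PI / 2 + IZR (up r) * PI). split.
  - assert (Hr : r * PI = x - PI / 2) by (unfold r; field; lra). split; nra.
  - assert (Hcos : cos (PI / 2 + IZR (up r) * PI) = 0).
    { rewrite cos_plus, cos_PI2, sin_PI2, sin_eq_0_1 by (exists (up r); reflexivity). ring. }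
    assert (Hpyth := sin2_cos2 (PI / 2 + IZR (up r) * PI)).
    rewrite Hcos in Hpyth. unfold Rsqr in Hpyth. nra.
Qed.

Lemma continuous_on_01_re_ivt g : continuous_on_01 g ->
  forall c v, 0 <= c <= 1 -> Re (g c) <= v <= Re (g 1) ->
  exists t, c <= t <= 1 /\ Re (g t) = v.
Proof.
  intros Hg c v Hc Hv.
  set (x := fun t => Re (g (clamp 0 1 t))).
  assert (Hx : forall t, 0 <= t <= 1 -> x t = Re (g t))
    by (intros; unfold x; rewrite clamp_id; auto).
  destruct (IVT_gen x c 1 v) as [t [Ht Hxt]].
  - intros t. apply continuity_pt_filterlim, continuous_Re.
    apply (continuous_clamp_comp g 0 1); [lra|]. intros s Hs. apply Hg, Hs.
  - rewrite !Hx by lra. rewrite Rmin_left, Rmax_right; lra.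
  - rewrite Rmin_left, Rmax_right in Ht by lra.
    exists t. split; [exact Ht|]. rewrite <- Hx by lra. exact Hxt.
Qed.

Lemma Rabs_Re_F_eps_sub_le eps g c d : c <= d -> contour_integrals_on eps g c d ->
  Rabs (Re (F_eps eps (g d)) - Re (F_eps eps (g c))) <= RInt (ZQ_integrand eps g) c d.
Proof.
  intros Hcd [HZ HQ].
  apply (is_RInt_fct_extend_fst (U := R_NormedModule) (V := R_NormedModule)) in HZ.
  assert (HQ' := RInt_correct (V := R_CompleteNormedModule) _ _ _ HQ).
  assert (Hbound : forall t, Rabs (fst (Z_integrand eps g t)) <= ZQ_integrand eps g t).
  { intros t. unfold ZQ_integrand, Z_integrand. rewrite <- Cmod_mult. apply re_le_Cmod. }
  apply Rabs_le. split.
  - apply Ropp_le_cancel. rewrite Ropp_involutive.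
    apply (is_RInt_le (fun t => - fst (Z_integrand eps g t)) _ c d _ _ Hcd
             (is_RInt_opp _ _ _ _ HZ) HQ').
    intros t _. assert (Hb := Hbound t). rewrite <- Rabs_Ropp in Hb.
    eapply Rle_trans; [apply Rle_abs | exact Hb].
  - apply (is_RInt_le _ _ c d _ _ Hcd HZ HQ').
    intros t _. eapply Rle_trans; [apply Rle_abs | apply Hbound].
Qed.

(* Alternating the signs of the three increments makes the unknown [a] and the
   [eps]-terms cancel, leaving [2 (c1 + c2)]. *)
Lemma three_crossings_ge_4 eps L a s c1 c2 : (s = 1 \/ s = -1) -> 1 <= c1 -> 1 <= c2 ->
  4 <= Rabs (eps * L + s * c1 - a)
       + Rabs (eps * (L + PI) + - s * c2 - (eps * L + s * c1))
       + Rabs (a + 2 * PI * eps - (eps * (L + PI) + - s * c2)).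
Proof. intros [-> | ->] H1 H2; split_Rabs; lra. Qed.

Lemma ZQ_gamma_ge_4 eps g : admissible_contour g -> 4 <= ZQ_gamma eps g.
Proof.
  intros Hadm. assert (Hg := proj1 (proj1 Hadm)).
  assert (Hper := admissible_contour_period g Hadm).
  assert (Hint := piecewise_C1_integrals eps g (proj1 Hadm)).
  assert (Hx1 : Re (g 1) = Re (g 0) + 2 * PI) by (rewrite Hper; reflexivity).
  assert (HPI := PI_RGT_0).
  destruct (exists_sin_unit_between (Re (g 0))) as [L [HL Hsin]].
  destruct (continuous_on_01_re_ivt g Hg 0 L) as [t1 [Ht1 E1]]; try lra.
  destruct (continuous_on_01_re_ivt g Hg t1 (L + PI)) as [t2 [Ht2 E2]]; try lra.
  assert (I1 := Hint 0 t1 ltac:(lra) ltac:(lra) ltac:(lra)).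
  assert (I2 := Hint t1 t2 ltac:(lra) ltac:(lra) ltac:(lra)).
  assert (I3 := Hint t2 1 ltac:(lra) ltac:(lra) ltac:(lra)).
  assert (B1 := Rabs_Re_F_eps_sub_le eps g 0 t1 ltac:(lra) I1).
  assert (B2 := Rabs_Re_F_eps_sub_le eps g t1 t2 ltac:(lra) I2).
  assert (B3 := Rabs_Re_F_eps_sub_le eps g t2 1 ltac:(lra) I3).
  assert (Hsplit : ZQ_gamma eps g = RInt (ZQ_integrand eps g) 0 t1
            + RInt (ZQ_integrand eps g) t1 t2 + RInt (ZQ_integrand eps g) t2 1).
  { destruct I1 as [_ Q1], I2 as [_ Q2], I3 as [_ Q3].
    unfold ZQ_gamma. fold (ZQ_integrand eps g).
    rewrite <- (RInt_Chasles (V := R_CompleteNormedModule) _ 0 t2 1)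
      by (try apply (ex_RInt_Chasles _ 0 t1 t2); assumption).
    rewrite <- (RInt_Chasles (V := R_CompleteNormedModule) _ 0 t1 t2) by assumption.
    reflexivity. }
  rewrite Hper, F_eps_add_2PI in B3.
  unfold F_eps, Re in B1, B2, B3. simpl in B1, B2, B3.
  fold (Re (g t1)) (Re (g t2)) (Re (g 0)) in B1, B2, B3.
  rewrite E1 in B1, B2. rewrite E2, neg_sin in B2, B3.
  assert (Hcrit := three_crossings_ge_4 eps L
           (eps * Re (g 0) + sin (Re (g 0)) * cosh (Im (g 0))) (sin L)
           (cosh (Im (g t1))) (cosh (Im (g t2))) Hsin (cosh_ge_1 _) (cosh_ge_1 _)).
  lra.
Qed.

Theorem mainTheorem1 :
  (forall (eps : R) (g : R -> C), 0 < eps -> admissible_contour g ->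
     Z_gamma eps g = RtoC (2 * PI * eps)) /\
  (exists (K eps0 : R), 0 < eps0 /\
     forall (eps : R), 0 < eps < eps0 ->
     forall g : R -> C, admissible_contour g ->
       Re (avg_sign eps g) <= PI / 2 * eps + K * eps ^ 2).
Proof.
  split.
  - intros eps g _ Hadm. exact (Z_gamma_eq eps g Hadm).
  - exists 0, 1. split; [lra|]. intros eps [Heps _] g Hadm.
    assert (HQ := ZQ_gamma_ge_4 eps g Hadm). assert (HPI := PI_RGT_0).
    unfold avg_sign. rewrite Z_gamma_eq, Re_RtoC_div by (exact Hadm || lra).
    replace (PI / 2 * eps + 0 * eps ^ 2) with (2 * PI * eps / 4) by field.
    apply Rmult_le_compat_l; [nra | apply Rinv_le_contravar; lra].
Qed.
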